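(* Let $\sigma\in\mathbb Z_{\ge1}$. The normalizer $\mathrm{Norm}_P(\Lambda_\sigma)=\{p\in NAM:p\Lambda_\sigma p^{-1}=\Lambda_\sigma\}$ is the semi-direct product of the groups $\mathrm{Norm}_N(\Lambda_\sigma)=\{n(\beta/\sigma,\rho):\beta\in\mathbb Z[i],\rho\in\mathbb R\}$ and $\mathrm{Norm}_M(\Lambda_\sigma)=\{m(\zeta)\in M:\zeta^{12}=1\}$.
   Context: $G=\mathrm{SU}(2,1)=\{g\in\mathrm{SL}_3(\mathbb C):\bar g^t\,\mathrm{diag}(1,1,-1)\,g=\mathrm{diag}(1,1,-1)\}$ with subgroups $N=\{n(b,r)=\begin{pmatrix}1+ir-\frac{|b|^2}2&b&-ir+\frac{|b|^2}2\\-\bar b&1&\bar b\\ ir-\frac{|b|^2}2&b&1-ir+\frac{|b|^2}2\end{pmatrix}:b\in\mathbb C,r\in\mathbb R\}$, $A=\{a(t)=\begin{pmatrix}\frac{t+t^{-1}}2&0&\frac{t-t^{-1}}2\\0&1&0\\\frac{t-t^{-1}}2&0&\frac{t+t^{-1}}2\end{pmatrix}:t>0\}$, $M=\{m(\zeta)=\mathrm{diag}(\zeta,\zeta^{-2},\zeta):|\zeta|=1\}$. Write $n(x,y,r)=n(x+iy,r)$. $\Lambda_\sigma$ is the lattice in $N$ generated by $n(1,0,0)$, $n(0,1,0)$, $n(0,0,2/\sigma)$. *)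

From HB Require Import structures.
From mathcomp Require Import all_boot all_order all_algebra.
From mathcomp Require Import complex.
From mathcomp Require Import reals.
Set Implicit Arguments. Unset Strict Implicit. Unset Printing Implicit Defensive.
Import Order.TTheory GRing.Theory Num.Theory.
Local Open Scope ring_scope.

Section SU21.
Variable R : realType.
Local Notation C := (complex R).
Local Notation M3 := ('M[C]_3).

Definition rC (x : R) : C := Complex x 0.
Definition cj (z : C) : C := let: Complex x y := z in Complex x (- y).
Definition iC : C := Complex 0 1.

Definition mx3 (a b c d e f g h k : C) : M3 :=
  \matrix_(i < 3, j < 3)
    nth 0 (nth [::] [:: [:: a; b; c]; [:: d; e; f]; [:: g; h; k]] i) j.

Definition nmx (b : C) (r : R) : M3 :=
  let h := rC (1/2) * (b * cj b) in
  mx3 (1 + iC * rC r - h) b (- iC * rC r + h)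
      (- cj b) 1 (cj b)
      (iC * rC r - h) b (1 - iC * rC r + h).

Definition amx (t : R) : M3 :=
  mx3 (rC ((t + t^-1) / 2)) 0 (rC ((t - t^-1) / 2))
      0 1 0
      (rC ((t - t^-1) / 2)) 0 (rC ((t + t^-1) / 2)).

Definition mmx (z : C) : M3 := mx3 z 0 0 0 (z ^- 2) 0 0 0 z.

Definition is_unit_modulus (z : C) : Prop := z * cj z = 1.

Definition inN (g : M3) : Prop := exists (b : C) (r : R), g = nmx b r.
Definition inA (g : M3) : Prop := exists t : R, 0 < t /\ g = amx t.
Definition inM (g : M3) : Prop := exists z : C, is_unit_modulus z /\ g = mmx z.
Definition inP (g : M3) : Prop :=
  exists n a m, inN n /\ inA a /\ inM m /\ g = n *m a *m m.

Inductive Lambda (sigma : nat) : M3 -> Prop :=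
  | Lam_one : Lambda sigma 1%:M
  | Lam_gen1 : Lambda sigma (nmx 1 0)
  | Lam_gen2 : Lambda sigma (nmx iC 0)
  | Lam_gen3 : Lambda sigma (nmx 0 (2 / sigma%:R))
  | Lam_mul g h : Lambda sigma g -> Lambda sigma h -> Lambda sigma (g *m h)
  | Lam_inv g : Lambda sigma g -> Lambda sigma (invmx g).

Definition normalizes (L : M3 -> Prop) (p : M3) : Prop :=
  (forall g, L g -> L (p *m g *m invmx p)) /\
  (forall h, L h -> exists g, L g /\ h = p *m g *m invmx p).

Definition Norm (S : M3 -> Prop) (L : M3 -> Prop) (p : M3) : Prop :=
  S p /\ normalizes L p.

Definition gaussian_int (z : C) : Prop :=
  exists x y : int, z = Complex x%:~R y%:~R.

End SU21.

(** Conjugation by [p = n(c,ρ) a(t) m(ζ)] acts on [N] by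
    [n(b,r) ↦ n(t ζ^3 b, t^2 r + 2 Im(c̄ t ζ^3 b))], and [Λ_σ] is the set of
    [n(b,r)] with [b ∈ ℤ[i]] and [σ(r - Re b Im b)/2 ∈ ℤ].  Asking that [p Λ_σ p^-1]
    contain, and be contained in, [Λ_σ] on the generators gives: [t^2] and [t^-2]
    are integers, so [t = 1]; [ζ^3] is a unit of [ℤ[i]], so [ζ^12 = 1]; and
    [σ c ∈ ℤ[i]].  Conversely these conditions are stable under products and
    inverses, and [N ∩ M] is trivial, which gives the semi-direct product. *)

From HB Require Import structures.
From mathcomp Require Import all_boot all_order all_algebra.
From mathcomp Require Import complex reals.
From mathcomp Require Import ring zify.
Set Implicit Arguments. Unset Strict Implicit. Unset Printing Implicit Defensive.
Import Order.TTheory GRing.Theory Num.Theory.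
Local Open Scope ring_scope.

(* After a generic morphism rewrite, [rC] and [cj] appear as these instances, which
   [ring] and [field] do not identify with the plain constants; the specialized
   rules [rCD], [cjM], ... below avoid the mismatch. *)
HB.instance Definition _ (R : realType) :=
  GRing.RMorphism.copy (@rC R) (real_complex R).
HB.instance Definition _ (R : realType) := GRing.RMorphism.copy (@cj R) conjc.

Section ComplexFacts.
Variable R : realType.
Local Notation C := (complex R).
Local Notation Re := (@complex.Re R).
Local Notation Im := (@complex.Im R).

Lemma complex_eq (z w : C) : Re z = Re w -> Im z = Im w -> z = w.
Proof. by case: z w => a b [c d] /= -> ->. Qed.

Lemma rCD (x y : R) : rC (x + y) = rC x + rC y. Proof. exact: rmorphD. Qed.
Lemma rCM (x y : R) : rC (x * y) = rC x * rC y. Proof. exact: rmorphM. Qed.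
Lemma cjD (z w : C) : cj (z + w) = cj z + cj w. Proof. exact: rmorphD. Qed.
Lemma cjM (z w : C) : cj (z * w) = cj z * cj w. Proof. exact: rmorphM. Qed.
Lemma cjX (z : C) n : cj (z ^+ n) = cj z ^+ n. Proof. exact: rmorphXn. Qed.

Lemma cjK : involutive (@cj R).
Proof. by case=> a b /=; rewrite opprK. Qed.

Lemma cj_rC (x : R) : cj (rC x) = rC x.
Proof. by rewrite /cj /rC oppr0. Qed.

Lemma rC_inj : injective (@rC R).
Proof. by move=> x y []. Qed.

Lemma rC_eq0 (x : R) : (rC x == 0) = (x == 0).
Proof. exact: fmorph_eq0. Qed.

Lemma rC_neq0 (x : R) : x != 0 -> rC x != 0.
Proof. by rewrite rC_eq0. Qed.

Lemma iC_neq0 : iC R != 0.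
Proof. by apply/eqP => /(congr1 Im) /= /eqP; rewrite oner_eq0. Qed.

Lemma iC_sqr : iC R * iC R = -1.
Proof. by apply: complex_eq => /=; ring. Qed.

Lemma iC_Im (w : C) : iC R * rC (Im w) = (w - cj w) / 2.
Proof.
apply: (@mulIf _ 2); first by rewrite pnatr_eq0.
by rewrite mulfVK ?pnatr_eq0 //; case: w => a b; apply: complex_eq => /=; ring.
Qed.

Lemma Re_rCM (u : R) (w : C) : Re (rC u * w) = u * Re w.
Proof. by case: w => a b /=; ring. Qed.

Lemma Im_rCM (u : R) (w : C) : Im (rC u * w) = u * Im w.
Proof. by case: w => a b /=; ring. Qed.

Lemma expr4_eq1 (w : C) : w ^+ 4 = 1 -> [\/ w = 1, w = -1, w = iC R | w = - iC R].
Proof.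
move=> w4; have : (w - 1) * (w + 1) * ((w - iC R) * (w + iC R)) == 0.
  have -> : (w - 1) * (w + 1) * ((w - iC R) * (w + iC R)) =
            w ^+ 4 - 1 + (w * w - 1) * (- (iC R * iC R) - 1) by ring.
  by rewrite iC_sqr opprK subrr mulr0 addr0 w4 subrr.
rewrite !mulf_eq0 !subr_eq0 !addr_eq0.
by case/orP => /orP [] /eqP ->; [constructor 1|constructor 2|constructor 3|constructor 4].
Qed.

(* A unit [x + iy] of [ℤ[i]] has [xy = 0], so its fourth power is [(x^2 - y^2)^2 = 1]. *)
Lemma gaussian_unit_expr4 (w : C) : w * cj w = 1 ->
  Re w \is a Num.int -> Im w \is a Num.int -> w ^+ 4 = 1.
Proof.
case: w => a b ww1 /intrP [x /= ax] /intrP [y /= ay]; subst a b.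
have xy2 : x%:~R * x%:~R + y%:~R * y%:~R = 1 :> R.
  by move/(congr1 Re): ww1 => /=; rewrite mulrN opprK.
have /(congr1 (fun k : int => k%:~R : R)) xy0 : x * y = 0.
  have : x * x + y * y = 1 by apply: (@intr_inj R); rewrite intrD !intrM xy2.
  by nia.
rewrite intrM in xy0; rewrite !exprS expr0 mulr1; apply: complex_eq => /=.
  transitivity ((x%:~R * x%:~R + y%:~R * y%:~R) ^+ 2 - 8 * (x%:~R * y%:~R) ^+ 2 : R).
    by ring.
  by rewrite xy2 xy0; ring.
transitivity (4 * (x%:~R * y%:~R) * (x%:~R * x%:~R - y%:~R * y%:~R) : R); first by ring.
by rewrite xy0; ring.
Qed.

Lemma unit_modulus_expr12 (z : C) : is_unit_modulus z ->
  Re (z ^+ 3) \is a Num.int -> Im (z ^+ 3) \is a Num.int -> z ^+ 12 = 1.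
Proof.
move=> zz1 z3_re z3_im; rewrite (_ : 12 = 3 * 4)%N // exprM.
by apply: gaussian_unit_expr4 => //; rewrite cjX -exprMn zz1 expr1n.
Qed.

End ComplexFacts.

Section MatrixInverse.
Variables (F : comUnitRingType) (n : nat).
Implicit Types A B g : 'M[F]_n.

Lemma mulmx1_invmx A B : A *m B = 1%:M -> invmx A = B.
Proof.
by move=> AB; have [uA _] := mulmx1_unit AB; rewrite -(mulKmx uA B) AB mulmx1.
Qed.

Lemma invmxM A B : A \in unitmx -> B \in unitmx ->
  invmx (A *m B) = invmx B *m invmx A.
Proof.
move=> uA uB; apply: mulmx1_invmx.
by rewrite -mulmxA (mulmxA B) (mulmxV uB) mul1mx (mulmxV uA).
Qed.

Lemma conjmxM A B g : A \in unitmx -> B \in unitmx ->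
  A *m B *m g *m invmx (A *m B) = A *m (B *m g *m invmx B) *m invmx A.
Proof. by move=> uA uB; rewrite invmxM // !mulmxA. Qed.

End MatrixInverse.

Section Matrices.
Variable R : realType.
Local Notation C := (complex R).
Local Notation Im := (@complex.Im R).
Local Notation M3 := 'M[C]_3.

Ltac mx3_ext := apply/matrixP; case=> [[|[|[|?]]] ?] //; case=> [[|[|[|?]]] ?] //;
  rewrite !mxE ?big_ord_recl ?big_ord0 ?mxE /=.

Lemma mx3_mul (a b c d e f g h k a' b' c' d' e' f' g' h' k' : C) :
  mx3 a b c d e f g h k *m mx3 a' b' c' d' e' f' g' h' k' =
  mx3 (a*a' + b*d' + c*g') (a*b' + b*e' + c*h') (a*c' + b*f' + c*k')
      (d*a' + e*d' + f*g') (d*b' + e*e' + f*h') (d*c' + e*f' + f*k')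
      (g*a' + h*d' + k*g') (g*b' + h*e' + k*h') (g*c' + h*f' + k*k').
Proof. by mx3_ext; ring. Qed.

Lemma mx3_1 : 1%:M = mx3 1 0 0 0 1 0 0 0 1 :> M3.
Proof. by mx3_ext. Qed.

Lemma mx3_inj (a b c d e f g h k a' b' c' d' e' f' g' h' k' : C) :
  mx3 a b c d e f g h k = mx3 a' b' c' d' e' f' g' h' k' ->
  [/\ a = a', b = b', c = c', d = d' & [/\ e = e', f = f', g = g', h = h' & k = k']].
Proof.
move=> E; have P i j (hi : (i < 3)%N) (hj : (j < 3)%N) :=
  congr1 (fun A : M3 => A (Ordinal hi) (Ordinal hj)) E.
move: (P 0 0 isT isT) (P 0 1 isT isT) (P 0 2 isT isT) (P 1 0 isT isT) (P 1 1 isT isT).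
by move: (P 1 2 isT isT) (P 2 0 isT isT) (P 2 1 isT isT) (P 2 2 isT isT); rewrite !mxE.
Qed.

Lemma nmxE (b : C) (r : R) : nmx b r =
  mx3 (1 + iC R * rC r - 1/2 * (b * cj b)) b (- iC R * rC r + 1/2 * (b * cj b))
      (- cj b) 1 (cj b)
      (iC R * rC r - 1/2 * (b * cj b)) b (1 - iC R * rC r + 1/2 * (b * cj b)).
Proof. by rewrite /nmx fmorph_div rmorph1 rmorph_nat. Qed.

Lemma nmx_mul (b b' : C) (r r' : R) :
  nmx b r *m nmx b' r' = nmx (b + b') (r + r' + Im (cj b * b')).
Proof.
rewrite !nmxE mx3_mul; congr mx3;
  by rewrite ?rCD ?cjD ?mulNr ?mulrDr ?iC_Im ?cjM ?cjK; field.
Qed.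

Lemma nmx0 : nmx 0 0 = 1%:M :> M3.
Proof. by rewrite nmxE mx3_1 !rmorph0; congr mx3; ring. Qed.

Lemma nmx_mulN (b : C) (r : R) : nmx b r *m nmx (- b) (- r) = 1%:M.
Proof. by rewrite nmx_mul addrN -nmx0; congr nmx; case: b => b1 b2 /=; ring. Qed.

Lemma invmx_nmx (b : C) (r : R) : invmx (nmx b r) = nmx (- b) (- r).
Proof. exact/mulmx1_invmx/nmx_mulN. Qed.

Lemma unitmx_nmx (b : C) (r : R) : nmx b r \in unitmx.
Proof. by case: (mulmx1_unit (nmx_mulN b r)). Qed.

Lemma nmx_inj (b b' : C) (r r' : R) : nmx b r = nmx b' r' -> b = b' /\ r = r'.
Proof.
rewrite !nmxE => /mx3_inj [/eqP e00 bb' _ _ _]; subst b'; split => //; apply: rC_inj.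
move: e00; rewrite -subr_eq0.
have -> : 1 + iC R * rC r - 1 / 2 * (b * cj b) - (1 + iC R * rC r' - 1 / 2 * (b * cj b))
   = iC R * (rC r - rC r') by ring.
by rewrite mulf_eq0 (negbTE (iC_neq0 R)) subr_eq0 => /eqP.
Qed.

Lemma amxE (t : R) : amx t =
  mx3 ((rC t + (rC t)^-1) / 2) 0 ((rC t - (rC t)^-1) / 2) 0 1 0
      ((rC t - (rC t)^-1) / 2) 0 ((rC t + (rC t)^-1) / 2).
Proof. by rewrite /amx !fmorph_div !rmorph_nat !rmorphB !rmorphD !fmorphV. Qed.

Lemma amx1 : amx 1 = 1%:M :> M3.
Proof. by rewrite amxE mx3_1 rmorph1 invr1; congr mx3; field. Qed.

Lemma amx_mul (t u : R) : t != 0 -> u != 0 -> amx t *m amx u = amx (t * u).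
Proof.
move=> t0 u0; rewrite !amxE mx3_mul rCM.
by congr mx3; field; rewrite ?rC_neq0.
Qed.

Lemma unitmx_amx (t : R) : t != 0 -> amx t \in unitmx.
Proof.
move=> t0; have := amx_mul t0 (invr_neq0 t0).
by rewrite divff // amx1 => /mulmx1_unit [].
Qed.

Lemma mmx_mul (z w : C) : z != 0 -> w != 0 -> mmx z *m mmx w = mmx (z * w).
Proof. by move=> z0 w0; rewrite /mmx mx3_mul; congr mx3; field; rewrite ?z0 ?w0. Qed.

Lemma mmx1 : mmx 1 = 1%:M :> M3.
Proof. by rewrite /mmx mx3_1 expr1n invr1. Qed.

Lemma unit_modulus_neq0 (z : C) : is_unit_modulus z -> z != 0.
Proof. by move=> zz1; apply: contra_eq_neq zz1 => ->; rewrite mul0r eq_sym oner_neq0. Qed.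

Lemma unit_modulus_cj (z : C) : is_unit_modulus z -> cj z = z^-1.
Proof. by move=> zz1; rewrite -[cj z](mulKf (unit_modulus_neq0 zz1)) zz1 mulr1. Qed.

Lemma unit_modulus_cjz (z : C) : is_unit_modulus z -> is_unit_modulus (cj z).
Proof. by rewrite /is_unit_modulus cjK mulrC. Qed.

Lemma invmx_mmx (z : C) : is_unit_modulus z -> invmx (mmx z) = mmx (cj z).
Proof.
move=> zz1; have z0 := unit_modulus_neq0 zz1.
by apply: mulmx1_invmx; rewrite unit_modulus_cj // mmx_mul ?invr_eq0 // divff // mmx1.
Qed.

Lemma unitmx_mmx (z : C) : is_unit_modulus z -> mmx z \in unitmx.
Proof.
move=> /unit_modulus_neq0 z0; have := mmx_mul z0 (invr_neq0 z0).
by rewrite divff // mmx1 => /mulmx1_unit [].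
Qed.

Lemma nmx_eq_mmx (b : C) (r : R) (w : C) : nmx b r = mmx w -> b = 0 /\ r = 0.
Proof.
rewrite nmxE /mmx => /mx3_inj [_ _ e02 /eqP e10 _]; move: e10.
rewrite oppr_eq0 => /eqP cjb0; have b0 : b = 0 by rewrite -[b]cjK cjb0 rmorph0.
split => //; apply: rC_inj; move/eqP: e02.
by rewrite b0 mul0r mulr0 addr0 mulNr oppr_eq0 mulf_eq0 (negbTE (iC_neq0 R)) rmorph0 => /eqP.
Qed.

Lemma conj_nmx (c b : C) (rho r : R) :
  nmx c rho *m nmx b r *m invmx (nmx c rho) = nmx b (r + 2 * Im (cj c * b)).
Proof.
rewrite invmx_nmx !nmx_mul; congr nmx; first by ring.
by case: c => c1 c2; case: b => b1 b2 /=; ring.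
Qed.

Lemma conj_mmx (z b : C) (r : R) : is_unit_modulus z ->
  mmx z *m nmx b r *m invmx (mmx z) = nmx (z ^+ 3 * b) r.
Proof.
move=> zz1; have z0 := unit_modulus_neq0 zz1.
rewrite invmx_mmx // (unit_modulus_cj zz1) /mmx !nmxE !mx3_mul; congr mx3;
  by rewrite ?cjM ?cjX ?(unit_modulus_cj zz1); field; rewrite z0.
Qed.

Lemma conj_amx (t : R) (b : C) (r : R) : t != 0 ->
  amx t *m nmx b r *m invmx (amx t) = nmx (rC t * b) (t ^+ 2 * r).
Proof.
move=> t0; apply: (canLR (mulmxK (unitmx_amx t0))).
rewrite amxE !nmxE !mx3_mul; congr mx3;
  by rewrite ?cjM ?cj_rC ?expr2 ?rCM; field; rewrite ?rC_neq0.
Qed.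

Lemma conj_nam (c : C) (rho t : R) (z b : C) (r : R) : t != 0 -> is_unit_modulus z ->
  let p := nmx c rho *m amx t *m mmx z in
  p *m nmx b r *m invmx p =
  nmx (rC t * (z ^+ 3 * b)) (t ^+ 2 * r + 2 * Im (cj c * (rC t * (z ^+ 3 * b)))).
Proof.
move=> t0 zz1 p; rewrite conjmxM ?unitmx_mmx ?unitmx_mul ?unitmx_nmx ?unitmx_amx //.
by rewrite conj_mmx // conjmxM ?unitmx_nmx ?unitmx_amx // conj_amx // conj_nmx.
Qed.

End Matrices.

Section Normalizes.
Variable R : realType.
Local Notation M3 := 'M[complex R]_3.
Variable L : M3 -> Prop.

Lemma normalizesP (p : M3) : p \in unitmx ->
  (forall g, L g -> L (p *m g *m invmx p)) ->
  (forall g, L g -> L (invmx p *m g *m p)) -> normalizes L p.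
Proof.
move=> up pL pVL; split => // h Lh; exists (invmx p *m h *m p); split; first exact: pVL.
by rewrite !mulmxA (mulmxV up) mul1mx -mulmxA (mulmxV up) mulmx1.
Qed.

Lemma normalizesV (p : M3) : p \in unitmx -> normalizes L p -> normalizes L (invmx p).
Proof.
move=> up [pL Lp]; apply: normalizesP; rewrite ?unitmx_inv ?invmxK // => g /Lp [g' [Lg' ->]].
by rewrite !mulmxA (mulVmx up) mul1mx -mulmxA (mulVmx up) mulmx1.
Qed.

Lemma normalizesM (p q : M3) : p \in unitmx -> q \in unitmx ->
  normalizes L p -> normalizes L q -> normalizes L (p *m q).
Proof.
move=> up uq [pL Lp] [qL Lq]; split.
  by move=> g Lg; rewrite conjmxM //; apply/pL/qL.
move=> h /Lp [g1 [/Lq [g2 [Lg2 ->]] ->]]; exists g2; split => //.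
by rewrite conjmxM.
Qed.

End Normalizes.

Section LatticeNormalizers.
Variables (R : realType) (sigma : nat).
Hypothesis sigma_gt0 : (0 < sigma)%N.
Local Notation C := (complex R).
Local Notation Re := (@complex.Re R).
Local Notation Im := (@complex.Im R).
Local Notation M3 := 'M[C]_3.
Local Notation L := (@Lambda R sigma).
Local Notation s := (sigma%:R : R).

Lemma sigmaR_neq0 : s != 0. Proof. by rewrite pnatr_eq0 -lt0n. Qed.

Definition lattice_coord (b : C) (r : R) : Prop :=
  [/\ Re b \is a Num.int, Im b \is a Num.int & (r - Re b * Im b) * s / 2 \is a Num.int].

Lemma Lambda_nmxMn (b : C) (r : R) n :
  L (nmx b r) -> L (nmx (rC n%:R * b) (n%:R * r)).
Proof.
move=> Lbr; elim: n => [|n IH].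
  by rewrite !mulr0n rmorph0 !mul0r nmx0; exact: Lam_one.
have -> : nmx (rC n.+1%:R * b) (n.+1%:R * r) = nmx (rC n%:R * b) (n%:R * r) *m nmx b r.
  rewrite nmx_mul -natr1 rCD rmorph1; congr nmx; first by ring.
  by case: b {Lbr IH} => b1 b2 /=; ring.
exact: Lam_mul.
Qed.

Lemma Lambda_nmxMz (b : C) (r : R) (k : int) :
  L (nmx b r) -> L (nmx (rC k%:~R * b) (k%:~R * r)).
Proof.
move=> Lbr; case: k => n; first exact: Lambda_nmxMn.
have := Lam_inv (Lambda_nmxMn n.+1 Lbr).
by rewrite invmx_nmx NegzE !intrN rmorphN !mulNr.
Qed.

Lemma Lambda_of_coord (b : C) (r : R) : lattice_coord b r -> L (nmx b r).
Proof.
case=> /intrP [x Rex] /intrP [y Imy] /intrP [k kr].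
have -> : nmx b r = nmx (rC x%:~R * 1) (x%:~R * 0) *m nmx (rC y%:~R * iC R) (y%:~R * 0)
                    *m nmx (rC k%:~R * 0) (k%:~R * (2 / s)).
  rewrite !nmx_mul; congr nmx.
    by case: b Rex Imy {kr} => b1 b2 /= -> ->; apply: complex_eq => /=; ring.
  by rewrite -kr -Rex -Imy /=; field; exact: sigmaR_neq0.
apply: Lam_mul; first apply: Lam_mul; apply: Lambda_nmxMz.
- exact: Lam_gen1.
- exact: Lam_gen2.
- exact: Lam_gen3.
Qed.

Lemma coord_of_Lambda (g : M3) : L g -> exists b r, lattice_coord b r /\ g = nmx b r.
Proof.
elim => {g}.
- exists 0, 0; rewrite nmx0; split => //.
  by split; rewrite /= ?mul0r ?subr0 ?mul0r rpred0.
- by exists 1, 0; split => //; split; rewrite /= ?mulr0 ?subr0 ?mul0r ?rpred0 ?rpred1.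
- by exists (iC R), 0; split => //; split; rewrite /= ?mul0r ?subr0 ?mul0r ?rpred0 ?rpred1.
- exists 0, (2 / s); split => //; split; rewrite /= ?rpred0 //.
  by rewrite mul0r subr0 mulfVK ?sigmaR_neq0 // divff ?rpred1 // pnatr_eq0.
- move=> g h _ [b [r [[b1 b2 br] ->]]] _ [b' [r' [[b1' b2' br'] ->]]].
  exists (b + b'), (r + r' + Im (cj b * b')); split; last by rewrite nmx_mul.
  split; [by rewrite raddfD rpredD | by rewrite raddfD rpredD |].
  have -> : (r + r' + Im (cj b * b') - Re (b + b') * Im (b + b')) * s / 2 =
       (r - Re b * Im b) * s / 2 + (r' - Re b' * Im b') * s / 2 - Im b * Re b' * s.
    by case: b {b1 b2 br} => ? ?; case: b' {b1' b2' br'} => ? ? /=; field.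
  by rewrite rpredB ?rpredD // !rpredM // rpred_nat.
- move=> g _ [b [r [[b1 b2 br] ->]]].
  exists (- b), (- r); split; last by rewrite invmx_nmx.
  split; [by rewrite raddfN rpredN | by rewrite raddfN rpredN |].
  have -> : (- r - Re (- b) * Im (- b)) * s / 2 =
       - ((r - Re b * Im b) * s / 2) - Re b * Im b * s.
    by case: b {b1 b2 br} => ? ? /=; field.
  by rewrite rpredB ?rpredN // !rpredM // rpred_nat.
Qed.

Lemma Lambda_nmxP (b : C) (r : R) : L (nmx b r) <-> lattice_coord b r.
Proof.
split; last exact: Lambda_of_coord.
by case/coord_of_Lambda => b' [r' [br /nmx_inj [-> ->]]].
Qed.

Lemma Lambda_nmx0P (r : R) : L (nmx 0 r) <-> r * s / 2 \is a Num.int.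
Proof.
rewrite Lambda_nmxP /lattice_coord /= mul0r subr0.
by split=> [[_ _ //] | r_int]; split; rewrite ?rpred0.
Qed.

Lemma lattice_coordN (b : C) (r : R) : lattice_coord b r -> lattice_coord (- b) r.
Proof. by case=> b1 b2 br; split; rewrite ?raddfN ?rpredN //= mulrNN. Qed.

Lemma lattice_coord_iC (b : C) (r : R) : lattice_coord b r -> lattice_coord (iC R * b) r.
Proof.
case: b => b1 b2 [/= i1 i2 br]; split; rewrite /= ?mul0r ?mul1r ?sub0r ?add0r ?rpredN //.
have -> : (r - - b2 * b1) * s / 2 = (r - b1 * b2) * s / 2 + b1 * b2 * s by field.
by rewrite rpredD // !rpredM // rpred_nat.
Qed.

Lemma lattice_coord_expr4 (w b : C) (r : R) : w ^+ 4 = 1 ->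
  lattice_coord b r -> lattice_coord (w * b) r.
Proof.
case/expr4_eq1 => -> br; rewrite ?mul1r ?mulN1r ?mulNr;
  by [|apply: lattice_coordN|apply: lattice_coord_iC|apply/lattice_coordN/lattice_coord_iC].
Qed.

(* Conjugating by [n(c,ρ)] shifts the [r]-coordinate by [2 Im(c̄ b)], and
   [σ Im(c̄ b) = (σ Re c) Im b - (σ Im c) Re b]. *)
Lemma lattice_coord_shift (c b : C) (r : R) :
  Re c * s \is a Num.int -> Im c * s \is a Num.int ->
  lattice_coord b r -> lattice_coord b (r + 2 * Im (cj c * b)).
Proof.
move=> c1 c2 [b1 b2 br]; split => //.
have -> : (r + 2 * Im (cj c * b) - Re b * Im b) * s / 2 =
   (r - Re b * Im b) * s / 2 + (Re c * s) * Im b - (Im c * s) * Re b.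
  by case: c {c1 c2} => ? ?; case: b {b1 b2 br} => ? ? /=; field.
by rewrite rpredB ?rpredD // rpredM.
Qed.

Lemma normalizes_nmx (c : C) (rho : R) :
  Re c * s \is a Num.int -> Im c * s \is a Num.int -> normalizes L (nmx c rho).
Proof.
have conj_Lambda (c' : C) (rho' : R) : Re c' * s \is a Num.int -> Im c' * s \is a Num.int ->
    forall g, L g -> L (nmx c' rho' *m g *m invmx (nmx c' rho')).
  move=> c1 c2 g /coord_of_Lambda [b [r [br ->]]].
  by rewrite conj_nmx; apply/Lambda_nmxP/lattice_coord_shift.
move=> c1 c2; apply: normalizesP; rewrite ?unitmx_nmx //; first exact: conj_Lambda.
rewrite -[nmx c rho]invmxK invmx_nmx [invmx (invmx _)]invmxK.
by apply: conj_Lambda; rewrite raddfN mulNr rpredN.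
Qed.

Lemma normalizes_nmx_coord (c : C) (rho : R) : normalizes L (nmx c rho) ->
  Re c * s \is a Num.int /\ Im c * s \is a Num.int.
Proof.
case=> cL _; split.
- have := cL _ (Lam_gen2 R sigma); rewrite conj_nmx => /Lambda_nmxP [_ _].
  rewrite (_ : (0 + 2 * Im (cj c * iC R) - Re (iC R) * Im (iC R)) * s / 2 = Re c * s) //.
  by case: c {cL} => ? ? /=; field.
- have := cL _ (Lam_gen1 R sigma); rewrite conj_nmx => /Lambda_nmxP [_ _].
  rewrite (_ : (0 + 2 * Im (cj c * 1) - Re 1 * Im 1) * s / 2 = - (Im c * s)) ?rpredN //.
  by case: c {cL} => ? ? /=; field.
Qed.

Lemma normalizes_mmx (z : C) : is_unit_modulus z -> z ^+ 12 = 1 ->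
  normalizes L (mmx z).
Proof.
have conj_Lambda (w : C) : is_unit_modulus w -> w ^+ 12 = 1 ->
    forall g, L g -> L (mmx w *m g *m invmx (mmx w)).
  move=> ww1 w12 g /coord_of_Lambda [b [r [br ->]]].
  rewrite conj_mmx //; apply/Lambda_nmxP/lattice_coord_expr4 => //.
  by rewrite -exprM.
move=> zz1 z12; apply: normalizesP; rewrite ?unitmx_mmx //; first exact: conj_Lambda.
rewrite -[mmx z]invmxK invmx_mmx // [invmx (invmx _)]invmxK.
by apply: conj_Lambda; [exact: unit_modulus_cjz | rewrite -cjX z12 rmorph1].
Qed.

Lemma normalizes_nam_gaussian (c : C) (rho t : R) (z : C) :
  t != 0 -> is_unit_modulus z -> normalizes L (nmx c rho *m amx t *m mmx z) ->
  Re (rC t * z ^+ 3) \is a Num.int /\ Im (rC t * z ^+ 3) \is a Num.int.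
Proof.
move=> t0 zz1 [pL _]; have := pL _ (Lam_gen1 R sigma).
by rewrite conj_nam // mulr1 => /Lambda_nmxP [re im _]; split.
Qed.

(* [n(0,2/σ)] is sent to [n(0, 2t^2/σ)], and by surjectivity some [n(0,r)] of [Λ_σ]
   is sent to it: [t^2] and [r σ/2 = t^-2] are both integers. *)
Lemma normalizes_nam_amx1 (c : C) (rho t : R) (z : C) :
  0 < t -> is_unit_modulus z -> normalizes L (nmx c rho *m amx t *m mmx z) -> t = 1.
Proof.
move=> t_gt0 zz1 [pL Lp]; have t0 : t != 0 by rewrite gt_eqF.
have z3b0 (b : C) : rC t * (z ^+ 3 * b) = 0 -> b = 0.
  move/eqP; rewrite mulf_eq0 rC_eq0 (negbTE t0) mulf_eq0 expf_eq0.
  by rewrite (negbTE (unit_modulus_neq0 zz1)) andbF /= => /eqP.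
have [k t2k] : exists k : int, t ^+ 2 = k%:~R.
  apply/intrP; have := pL _ (Lam_gen3 R sigma).
  rewrite conj_nam // !mulr0 addr0 => /Lambda_nmx0P.
  by rewrite (_ : t ^+ 2 * (2 / s) * s / 2 = t ^+ 2) //; field; exact: sigmaR_neq0.
have [g [Lg]] := Lp _ (Lam_gen3 R sigma).
case/coord_of_Lambda: Lg => b [r [br ->]]; rewrite conj_nam // => /nmx_inj [/esym/z3b0 b0].
rewrite b0 !mulr0 addr0 => r_eq.
move: br; rewrite b0 => /Lambda_nmxP /Lambda_nmx0P /intrP [k' rk'].
have kk' : k * k' = 1.
  apply: (@intr_inj R); rewrite intrM -t2k -rk' !mulrA -r_eq.
  by field; exact: sigmaR_neq0.
have k1 : k = 1.
  have k_gt0 : 0 < k by rewrite -(ltr0z R) -t2k exprn_gt0.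
  have k'_gt0 : 0 < k' by nia.
  by nia.
have /eqP : (t - 1) * (t + 1) = 0 by rewrite -subr_sqr expr1n t2k k1 subrr.
rewrite mulf_eq0 subr_eq0 addr_eq0 => /orP [/eqP //|/eqP t_1].
by move: t_gt0; rewrite t_1 oppr_gt0 ltr10.
Qed.

Lemma NormN_gaussian (g : M3) : Norm (@inN R) L g <->
  exists (beta : C) (rho : R), gaussian_int beta /\ g = nmx (beta / rC s) rho.
Proof.
have rs0 : rC s != 0 by rewrite rC_eq0 sigmaR_neq0.
split.
  case=> [[c [rho ->]] /normalizes_nmx_coord [/intrP [x cx] /intrP [y cy]]].
  exists (Complex x%:~R y%:~R), rho; split; first by exists x, y.
  congr nmx; apply: (mulIf rs0); rewrite mulfVK //.
  by rewrite -cx -cy; case: c {cx cy} => ? ? /=; apply: complex_eq => /=; ring.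
case=> beta [rho [[x [y ->]] ->]]; split; first by exists (Complex x%:~R y%:~R / rC s), rho.
rewrite mulrC -fmorphV; apply: normalizes_nmx.
- by rewrite Re_rCM /= mulrAC mulVf ?sigmaR_neq0 // mul1r intr_int.
- by rewrite Im_rCM /= mulrAC mulVf ?sigmaR_neq0 // mul1r intr_int.
Qed.

Lemma NormM_expr12 (g : M3) : Norm (@inM R) L g <->
  exists zeta : C, is_unit_modulus zeta /\ zeta ^+ 12 = 1 /\ g = mmx zeta.
Proof.
split; last by case=> z [zz1 [z12 ->]]; split; [exists z | exact: normalizes_mmx].
case=> [[z [zz1 ->]] [zL _]]; exists z; do 2!split => //.
have := zL _ (Lam_gen1 R sigma); rewrite conj_mmx // mulr1.
by case/Lambda_nmxP => z3_re z3_im _; exact: unit_modulus_expr12.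
Qed.

Lemma NormNM_unitmx (n m : M3) :
  Norm (@inN R) L n -> Norm (@inM R) L m -> n \in unitmx /\ m \in unitmx.
Proof. by move=> [[c [rho ->]] _] [[z [zz1 ->]] _]; rewrite unitmx_nmx unitmx_mmx. Qed.

Lemma NormP_decomp (p : M3) : Norm (@inP R) L p <->
  exists n m, Norm (@inN R) L n /\ Norm (@inM R) L m /\ p = n *m m.
Proof.
split; last first.
  case=> n [m [Nn [Nm ->]]]; have [un um] := NormNM_unitmx Nn Nm.
  case: Nn Nm un um => [[c [rho ->]] nL] [[z [zz1 ->]] mL] un um.
  split; last exact: normalizesM.
  exists (nmx c rho), (amx 1), (mmx z); split; first by exists c, rho.
  split; first by exists 1; rewrite ltr01.
  by split; [exists z | rewrite amx1 mulmx1].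
case=> [[n [a [m [[c [rho ->]] [[t [t_gt0 ->]] [[z [zz1 ->]] ->]]]]]] pL].
have t1 := normalizes_nam_amx1 t_gt0 zz1 pL; subst t.
have Mm : Norm (@inM R) L (mmx z).
  apply/NormM_expr12; exists z; do 2!split => //.
  have [z3_re z3_im] := normalizes_nam_gaussian (oner_neq0 R) zz1 pL.
  by rewrite rmorph1 mul1r in z3_re z3_im; exact: unit_modulus_expr12.
rewrite amx1 mulmx1 in pL *.
have um := unitmx_mmx zz1.
have nL : normalizes L (nmx c rho).
  rewrite -[nmx c rho](mulmxK um); apply: normalizesM => //.
  - by rewrite unitmx_mul unitmx_nmx.
  - by rewrite unitmx_inv.
  - by apply: normalizesV => //; case: Mm.
by exists (nmx c rho), (mmx z); split; [split; [exists c, rho|] | split].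
Qed.

Lemma NormNM_uniq (n m n' m' : M3) :
  Norm (@inN R) L n -> Norm (@inM R) L m ->
  Norm (@inN R) L n' -> Norm (@inM R) L m' ->
  n *m m = n' *m m' -> n = n' /\ m = m'.
Proof.
move=> [[c [rho ->]] _] [[z [zz1 ->]] _] [[c' [rho' ->]] _] [[z' [zz1' ->]] _] E.
have : invmx (nmx c' rho') *m nmx c rho = mmx z' *m invmx (mmx z).
  by apply: (canRL (mulmxK (unitmx_mmx zz1))); rewrite -mulmxA E mulKmx ?unitmx_nmx.
rewrite invmx_nmx nmx_mul invmx_mmx //.
rewrite mmx_mul ?(unit_modulus_neq0 zz1') ?(unit_modulus_neq0 (unit_modulus_cjz zz1)) //.
case/nmx_eq_mmx => /eqP; rewrite addrC subr_eq0 => /eqP c_eq; subst c'.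
have -> : - rho' + rho + Im (cj (- c) * c) = rho - rho' by case: c {E} => ? ? /=; ring.
move=> /eqP; rewrite subr_eq0 => /eqP rho_eq; subst rho'; split => //.
by move/(congr1 (mulmx (invmx (nmx c rho)))): E; rewrite !mulKmx ?unitmx_nmx.
Qed.

Lemma NormN_normal (p n : M3) :
  Norm (@inP R) L p -> Norm (@inN R) L n -> Norm (@inN R) L (p *m n *m invmx p).
Proof.
move=> Pp [[b [r En]] nL]; case: (Pp) => _ pL.
have [n1 [m1 [[[c [rho En1]] _] [[[z [zz1 Em1]] _] Ep]]]] := (NormP_decomp p).1 Pp.
have up : p \in unitmx by rewrite Ep En1 Em1 unitmx_mul unitmx_nmx unitmx_mmx.
have un : n \in unitmx by rewrite En unitmx_nmx.
split.
  exists (z ^+ 3 * b), (r + 2 * Im (cj c * (z ^+ 3 * b))).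
  by rewrite Ep En1 Em1 En conjmxM ?unitmx_nmx ?unitmx_mmx // conj_mmx // conj_nmx.
apply: normalizesM; rewrite ?unitmx_mul ?up ?unitmx_inv //; first exact: normalizesM.
exact: normalizesV.
Qed.

End LatticeNormalizers.

Unset Implicit Arguments.

Theorem proposition8p5 (R : realType) (sigma : nat) (hsigma : (1 <= sigma)%N) :
  (* Norm_N(Lambda_sigma) = { n(beta/sigma, rho) : beta in Z[i], rho in R } *)
  (forall g : 'M[complex R]_3,
     Norm (@inN R) (Lambda sigma) g <->
     exists (beta : complex R) (rho : R),
       gaussian_int beta /\ g = nmx (beta / (rC (sigma%:R : R))) rho) /\
  (* Norm_M(Lambda_sigma) = { m(zeta) in M : zeta^12 = 1 } *)
  (forall g : 'M[complex R]_3,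
     Norm (@inM R) (Lambda sigma) g <->
     exists zeta : complex R,
       is_unit_modulus zeta /\ zeta ^+ 12 = 1 /\ g = mmx zeta) /\
  (* Norm_P(Lambda_sigma) is the semi-direct product Norm_N ⋊ Norm_M : *)
  (* Norm_P = Norm_N * Norm_M, *)
  (forall p : 'M[complex R]_3,
     Norm (@inP R) (Lambda sigma) p <->
     exists n m, Norm (@inN R) (Lambda sigma) n /\
                 Norm (@inM R) (Lambda sigma) m /\ p = n *m m) /\
  (* with unique decomposition (Norm_N ∩ Norm_M trivial), *)
  (forall n m n' m' : 'M[complex R]_3,
     Norm (@inN R) (Lambda sigma) n -> Norm (@inM R) (Lambda sigma) m ->
     Norm (@inN R) (Lambda sigma) n' -> Norm (@inM R) (Lambda sigma) m' ->
     n *m m = n' *m m' -> n = n' /\ m = m') /\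
  (* and Norm_N normal in Norm_P. *)
  (forall p n : 'M[complex R]_3,
     Norm (@inP R) (Lambda sigma) p -> Norm (@inN R) (Lambda sigma) n ->
     Norm (@inN R) (Lambda sigma) (p *m n *m invmx p)).
Proof.
split; first exact: NormN_gaussian.
split; first exact: NormM_expr12.
split; first exact: NormP_decomp.
split; first exact: NormNM_uniq.
exact: NormN_normal.
Qed.
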